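(* For every join query $\mathcal R$ and every degree configuration $c\in\mathcal C_2$, $$\mathsf{MO}(\mathcal R(c))\le \mathsf{DBP}(\mathcal R(c),2)+|C|\log_{\mathrm{IN}}2,$$ where $C$ is a cover attaining the minimum in the definition of $\mathsf{DBP}(\mathcal R(c),2)$.
   Context: A join query consists of a finite set $\mathcal R$ of relations; each $R$ is a finite set of tuples over attribute set $\mathsf{attr}(R)$; $\mathcal A=\bigcup_R\mathsf{attr}(R)$. $\mathrm{IN}=\sum_{R\in\mathcal R}|R|\ge2$ (input size of the original query), $\log=\log_{\mathrm{IN}}$. For a relation $S$, $A\subseteq\mathsf{attr}(S)$, $v\in\pi_A(S)$: $\mathsf{deg}(v,S,A)=|\{t\in S:\pi_A(t)=v\}|$; $d_{S,A}=\max_{v\in\pi_A(S)}\mathsf{deg}(v,S,A)$ for $A\ne\emptyset$, $d_{S,\emptyset}=|S|$; for $A\subseteq B\subseteq\mathsf{attr}(S)$, $d(A,B,S)=\log d_{\pi_B(S),A}$. Degree configurations: buckets $B_l=[2^l,2^{l+1})$, $l\in\mathbb N$, ordered by index; $c\in\mathcal C_2$ maps each $(R,A)$, $A\subseteq\mathsf{attr}(R)$, to a bucket with $A'\subseteq A\Rightarrow c(R,A)\le c(R,A')$, $c(R,\mathsf{attr}(R))=B_0$, $c(R,\emptyset)=B_{\lfloor\log_2|R|\rfloor}$; $R(c)=\{t\in R:\forall A\subseteq\mathsf{attr}(R),\ \mathsf{deg}(\pi_A(t),R,A)\in c(R,A)\}$, $\mathcal R(c)=\{R(c)\}$ (assumed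 nonempty). MO: for a set $\mathcal S$ of relations, variables $s_F$ ($F\subseteq\mathcal A$), constraints $s_\emptyset=0$; $s_F\le s_{F'}$ for $F\subseteq F'$; $s_{B\cup E}\le s_{A\cup E}+d(A,B,S)$ for all $S\in\mathcal S$, $E\subseteq\mathcal A$, $A\subseteq B\subseteq\mathsf{attr}(S)$; $\mathsf{MO}(\mathcal S)=\max s_{\mathcal A}$. DBP: a cover is a set $C$ of pairs $(S,A)$, $S\in\mathcal S$, $A\subseteq\mathsf{attr}(S)$, with $\bigcup_{(S,A)\in C}A=\mathcal A$; $O_{C,L}$ is the optimal value of minimizing $\sum_{a\in\mathcal A}v_a$ over real $v_a\ge0$ with $\sum_{a\in A'}v_a\ge\log(d_{\pi_A(S),A\setminus A'}/L)$ for all $(S,A)\in C$, $A'\subseteq A$; $\mathsf{DBP}(\mathcal S,L)=\min_C O_{C,L}$. *)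

From Stdlib Require Import Reals.
From mathcomp Require Import all_boot.
Set Implicit Arguments. Unset Strict Implicit. Unset Printing Implicit Defensive.

(* A tuple over attribute type A with values in V: a finite function that is
   [Some _] exactly on the attributes it is defined on. *)
Notation jtup A V := {ffun A -> option V}.
Notation jrel A V := ({set A} * {set jtup A V})%type.

Section JoinDefs.
Variables A V : finType.
Local Open Scope R_scope.

Definition attr (r : jrel A V) : {set A} := r.1.
Definition tups (r : jrel A V) : {set jtup A V} := r.2.

Definition wf_rel (r : jrel A V) : Prop :=
  forall t, t \in tups r -> forall a, (t a != None) = (a \in attr r).

Definition proj_t (B : {set A}) (t : jtup A V) : jtup A V :=
  [ffun a => if a \in B then t a else None].

Definition proj (B : {set A}) (r : jrel A V) : jrel A V :=
  (B, [set proj_t B t | t in tups r]).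

Definition deg (v : jtup A V) (r : jrel A V) (B : {set A}) : nat :=
  #|[set t in tups r | proj_t B t == v]|.

Definition dmax (r : jrel A V) (B : {set A}) : nat :=
  if B == set0 then #|tups r|
  else \max_(v in tups (proj B r)) deg v r B.

Definition IN (Q : {set jrel A V}) : nat := \sum_(r in Q) #|tups r|.

Definition logIN (n : nat) (x : R) : R := Rdiv (ln x) (ln (INR n)).

Definition dlog (n : nat) (X Y : {set A}) (r : jrel A V) : R :=
  logIN n (INR (dmax (proj Y r) X)).

Definition calA (S : {set jrel A V}) : {set A} := \bigcup_(r in S) attr r.

(* Degree configurations in C_2: c r X is the index l of the bucket
   B_l = [2^l, 2^(l+1)) assigned to (r, X). *)
Definition in_bucket (n l : nat) : bool := (2 ^ l <= n < 2 ^ l.+1)%N.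

Definition is_config (Q : {set jrel A V}) (c : jrel A V -> {set A} -> nat) : Prop :=
  forall r, r \in Q ->
    (forall X Y : {set A}, X \subset Y -> Y \subset attr r -> (c r Y <= c r X)%N) /\
    c r (attr r) = 0%N /\
    c r set0 = trunc_log 2 #|tups r|.

Definition restrict (c : jrel A V -> {set A} -> nat) (r : jrel A V) : jrel A V :=
  (attr r, [set t in tups r | [forall X : {set A},
      (X \subset attr r) ==> in_bucket (deg (proj_t X t) r X) (c r X)]]).

Definition restrictQ (c : jrel A V -> {set A} -> nat) (Q : {set jrel A V}) : {set jrel A V} :=
  [set restrict c r | r in Q].

(* Feasible points of the MO linear program for S (n = IN of the original query) *)
Definition MO_feasible (n : nat) (S : {set jrel A V}) (s : {set A} -> R) : Prop :=
  s set0 = 0 /\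
  (forall F F' : {set A}, F \subset F' -> F' \subset calA S -> (s F <= s F')) /\
  (forall r (E X Y : {set A}), r \in S -> E \subset calA S -> X \subset Y -> Y \subset attr r ->
     (s (Y :|: E) <= s (X :|: E) + dlog n X Y r)).

Definition is_cover (S : {set jrel A V}) (C : {set (jrel A V * {set A})}) : Prop :=
  (forall p, p \in C -> p.1 \in S /\ p.2 \subset attr p.1) /\
  \bigcup_(p in C) p.2 = calA S.

Definition DBP_feasible (n : nat) (S : {set jrel A V}) (L : R)
    (C : {set (jrel A V * {set A})}) (v : A -> R) : Prop :=
  (forall a, a \in calA S -> (0 <= v a)) /\
  (forall p (A' : {set A}), p \in C -> A' \subset p.2 ->
     (logIN n (INR (dmax (proj p.2 p.1) (p.2 :\: A')) / L)
        <= \big[Rplus/0]_(a in A') v a)).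

Definition DBP_obj (S : {set jrel A V}) (v : A -> R) : R :=
  \big[Rplus/0]_(a in calA S) v a.

Definition is_O (n : nat) (S : {set jrel A V}) (L : R)
    (C : {set (jrel A V * {set A})}) (o : R) : Prop :=
  (exists v, DBP_feasible n S L C v /\ DBP_obj S v = o) /\
  (forall v, DBP_feasible n S L C v -> (o <= DBP_obj S v)).

End JoinDefs.

(* Peel the cover off one pair (R, A) at a time.  If E is the attribute set
   covered so far, an MO constraint gives
   s(A ∪ E) <= s(E) + log d_{π_A(R), A ∩ E}, and the DBP constraint for
   A' = A \ E bounds that logarithm by the sum of v over A \ E plus log 2,
   the price of dividing the degree by L = 2.  Summing over the |C| pairs,
   the sets A \ E partition the covered attributes, so the v-terms add up to
   the DBP objective. *)
From Stdlib Require Import Reals Lra.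
From mathcomp Require Import all_boot.
From HB Require Import structures.
Local Open Scope R_scope.

HB.instance Definition _ := Monoid.isComLaw.Build R 0 Rplus
  (fun x y z => esym (Rplus_assoc x y z)) Rplus_comm Rplus_0_l.

Lemma big_setUD (T : finType) (R : Type) (idx : R) (op : Monoid.com_law idx)
    (X E : {set T}) (F : T -> R) :
  \big[op/idx]_(i in X :|: E) F i =
    op (\big[op/idx]_(i in X :\: E) F i) (\big[op/idx]_(i in E) F i).
Proof.
rewrite (big_setID E) Monoid.mulmC setUC setUK.
by rewrite setDUl setDv set0U.
Qed.

(* Rocq's [ln] is [0] outside the positive reals. *)
Lemma ln_0 : ln 0 = 0.
Proof. by rewrite /ln; case: Rlt_dec => // lt00; case: (Rlt_irrefl 0 lt00). Qed.

Lemma ln_INR_gt0 {n : nat} : (2 <= n)%N -> 0 < ln (INR n).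
Proof.
move=> n_ge2; rewrite -ln_1; apply: ln_increasing; first lra.
have : INR 2 <= INR n by apply/le_INR/leP.
rewrite /=; lra.
Qed.

Lemma logIN_ge0 {n : nat} {x : R} : (2 <= n)%N -> 1 <= x -> 0 <= logIN n x.
Proof.
move=> n_ge2 x_ge1; apply: Rle_mult_inv_pos; last exact: ln_INR_gt0.
case: (Rle_lt_or_eq_dec 1 x x_ge1) => [x_gt1 | <-]; last by rewrite ln_1; lra.
by apply/Rlt_le; rewrite -ln_1; apply: ln_increasing; lra.
Qed.

Lemma logIN_le_div_add (n : nat) (x y : R) : (2 <= n)%N -> 0 <= x -> 1 <= y ->
  logIN n x <= logIN n (x / y) + logIN n y.
Proof.
move=> n_ge2 x_ge0 y_ge1; have lnn_gt0 := ln_INR_gt0 n_ge2.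
case: (Rle_lt_or_eq_dec 0 x x_ge0) => [x_gt0 | <-].
- have y_gt0 : 0 < y by lra.
  rewrite /logIN /Rdiv ln_mult ?ln_Rinv //; last exact: Rinv_0_lt_compat.
  by apply: Req_le; field; lra.
- have := logIN_ge0 n_ge2 y_ge1.
  by rewrite Rdiv_0_l /logIN ln_0 Rdiv_0_l; lra.
Qed.

Section MOBoundedByDBP.
Variables (A V : finType) (n : nat) (S : {set jrel A V}).
Variables (C : {set (jrel A V * {set A})}) (v : A -> R) (s : {set A} -> R).
Hypothesis n_ge2 : (2 <= n)%N.
Hypothesis C_cover : is_cover S C.
Hypothesis v_feasible : DBP_feasible n S 2 C v.
Hypothesis s_feasible : MO_feasible n S s.

Lemma MO_feasible_setU {r} {Y E : {set A}} :
  r \in S -> Y \subset attr r -> E \subset calA S ->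
  s (Y :|: E) <= s E + dlog n (Y :&: E) Y r.
Proof.
move=> rS Y_sub E_sub.
have := s_feasible.2.2 r E (Y :&: E) Y rS E_sub (subsetIl _ _) Y_sub.
by rewrite [Y :&: E]setIC setIK.
Qed.

Lemma DBP_feasible_dlog {p} (E : {set A}) : p \in C ->
  dlog n (p.2 :&: E) p.2 p.1 <= \big[Rplus/0]_(a in p.2 :\: E) v a + logIN n 2.
Proof.
move=> pC.
have := v_feasible.2 p (p.2 :\: E) pC (subsetDl _ _).
rewrite setDDr setDv set0U => dbp.
have := @logIN_le_div_add n (INR (dmax (proj p.2 p.1) (p.2 :&: E))) 2
  n_ge2 (pos_INR _) (ltac:(lra) : 1 <= 2).
rewrite /dlog; lra.
Qed.

Lemma bigcup_cover_sub {l : seq (jrel A V * {set A})} :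
  all [in C] l -> \bigcup_(p <- l) p.2 \subset calA S.
Proof.
move=> /allP lC; rewrite -C_cover.2 bigcup_seq; apply/bigcupsP => p pl.
exact/bigcup_sup/lC.
Qed.

Lemma MO_le_DBP_bigcup (l : seq (jrel A V * {set A})) : all [in C] l ->
  s (\bigcup_(p <- l) p.2) <=
    \big[Rplus/0]_(a in \bigcup_(p <- l) p.2) v a + INR (size l) * logIN n 2.
Proof.
elim: l => [|p l IHl]; first by rewrite big_nil big_set0 s_feasible.1 /=; lra.
move=> /andP[pC lC]; rewrite big_cons [size _]/= S_INR.
set E := \bigcup_(q <- l) q.2.
have [p1S p2_sub] := C_cover.1 p pC.
have := MO_feasible_setU p1S p2_sub (bigcup_cover_sub lC).
have := DBP_feasible_dlog E pC.
have := IHl lC.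
rewrite -/E big_setUD /=; lra.
Qed.

Lemma MO_le_DBP_obj : s (calA S) <= DBP_obj S v + INR #|C| * logIN n 2.
Proof.
have all_C : all [in C] (enum C) by apply/allP => p; rewrite mem_enum.
have := MO_le_DBP_bigcup (enum C) all_C.
by rewrite big_enum C_cover.2 -cardE.
Qed.

End MOBoundedByDBP.

Theorem theorem4p3 (A V : finType) (Q : {set jrel A V})
    (c : jrel A V -> {set A} -> nat) :
  (forall r, r \in Q -> wf_rel r) ->
  (2 <= IN Q)%N ->
  is_config Q c ->
  (forall r, r \in Q -> tups (restrict c r) != set0) ->
  forall (C : {set (jrel A V * {set A})}) (oC : R),
    is_cover (restrictQ c Q) C ->
    is_O (IN Q) (restrictQ c Q) 2 C oC ->
    (forall C' v', is_cover (restrictQ c Q) C' ->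
       DBP_feasible (IN Q) (restrictQ c Q) 2 C' v' ->
       (oC <= DBP_obj (restrictQ c Q) v')) ->
    forall s, MO_feasible (IN Q) (restrictQ c Q) s ->
      (s (calA (restrictQ c Q)) <= oC + INR #|C| * logIN (IN Q) 2).
Proof.
move=> _ IN_ge2 _ _ C oC C_cover [[v [v_feasible <-]] _] _ s s_feasible.
exact: MO_le_DBP_obj IN_ge2 C_cover v_feasible s_feasible.
Qed.
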